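(* Let $G$ be a finite simple $2$-connected graph with at least $4$ vertices. Suppose that there is at most one vertex $x$ of $G$ for which there exists a vertex $y\in V(G)\setminus(N_G(x)\cup\{x\})$ with $|N_G(x)\cup N_G(y)|\leqslant 3$. Then $G$ contains a chorded cycle.
   Context: A chorded cycle is a cycle together with an edge of the graph, not on the cycle, joining two vertices of the cycle. $N_G(x)$ is the set of neighbours of $x$ in $G$. *)

(* A finite simple graph is a symmetric irreflexive relation
   e on a finType T (vertex set = T). *)
From mathcomp Require Import all_boot.
Set Implicit Arguments. Unset Strict Implicit. Unset Printing Implicit Defensive.

Definition simple_graph (T : finType) (e : rel T) : Prop :=
  irreflexive e /\ symmetric e.

Definition nbhd (T : finType) (e : rel T) (x : T) : {set T} := [set y | e x y].

Definition del_vertex (T : finType) (e : rel T) (v : T) : rel T :=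
  [rel a b | [&& a != v, b != v & e a b]].

Definition connected_graph (T : finType) (e : rel T) : Prop :=
  forall a b : T, connect e a b.

Definition two_connected (T : finType) (e : rel T) : Prop :=
  [/\ 3 <= #|T|, connected_graph e &
      forall v a b : T, a != v -> b != v -> connect (del_vertex e v) a b].

(* A chorded cycle: a cycle together with an edge uv,
   u,v on the cycle, which is not a cycle edge. *)
Definition is_cycle (T : finType) (e : rel T) (c : seq T) : Prop :=
  3 <= size c /\ ucycle e c.

Definition has_chorded_cycle (T : finType) (e : rel T) : Prop :=
  exists c : seq T, is_cycle e c /\
    exists u v : T, [/\ u \in c, v \in c, e u v, u != next c v & v != next c u].

Definition bad_vertex (T : finType) (e : rel T) (x : T) : Prop :=
  exists y : T, [/\ y != x, ~~ e x y & #|nbhd e x :|: nbhd e y| <= 3].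

From mathcomp Require Import all_boot.
From Stdlib Require Import Classical.
Set Implicit Arguments. Unset Strict Implicit. Unset Printing Implicit Defensive.

(* Suppose G has no chorded cycle and take a longest path x :: s. Every
   neighbour of the end x lies on the path, and at most one of them differs
   from the successor of x: two such neighbours would close a cycle through the
   farther one, with the edge to the nearer one as a chord. By 2-connectivity
   x does have such a neighbour w; let y be the predecessor of w on the path.
   Rotating the path at w (Posa) gives a longest path ending at y, so y has
   at most two neighbours as well, one of them w. If y is the successor of x,
   then N(x) u N(y) lies in {x, y, w}, so w separates {x, y} from a fourth
   vertex; otherwise x and y are non-adjacent with |N(x) u N(y)| <= 3, so both
   satisfy the exceptional condition of the hypothesis, although x <> y. *)

Lemma next_uniq_cat (T : eqType) (a b : seq T) (x : T) :
  uniq (a ++ x :: b) -> next (a ++ x :: b) x = head (head x a) b.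
Proof.
move=> U; rewrite -(next_rot (size a) U) rot_size_cat /=.
by case: b {U} => [|y b] /=; [case: a | rewrite eqxx] => /=; rewrite ?eqxx.
Qed.

Lemma exists_notin (T : finType) (s : seq T) : size s < #|T| -> exists z, z \notin s.
Proof.
move=> lt_s_T; apply/existsP; rewrite -negb_forall; apply: contraTN lt_s_T.
move=> /forallP s_all; rewrite -leqNgt (leq_trans _ (card_size s)) //.
by apply/subset_leq_card/subsetP => z _; move: (s_all z).
Qed.

Section SimpleGraph.

Variables (T : finType) (e : rel T).
Hypotheses (e_irr : irreflexive e) (e_sym : symmetric e).

Lemma two_connected_nbr_neq x v :
  two_connected e -> x != v -> exists2 y, e x y & y != v.
Proof.
case=> T3 _ e_2conn xv.
have [z] : exists z, z \notin [:: x; v] by exact: exists_notin.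
rewrite !inE negb_or => /andP[zx zv].
case/connectP: (e_2conn v x z xv zv) => [[|y p]] /=.
  by move=> _ ze; rewrite ze eqxx in zx.
by case/andP=> /and3P[_ yv exy] _ _; exists y.
Qed.

Lemma two_connected_small x y w :
  two_connected e -> x != w -> y != w ->
  nbhd e x \subset [:: y; w] -> nbhd e y \subset [:: x; w] -> #|T| <= 3.
Proof.
case=> _ _ e_2conn xw yw Nx Ny.
have del_sym : connect_sym (del_vertex e w).
  by apply: sym_connect_sym => a b; rewrite /del_vertex /= e_sym andbCA.
have xy_closed : closed (del_vertex e w) [:: x; y].
  apply: intro_closed => // a b /and3P[_ bw eab] a_xy.
  move: a_xy; rewrite !inE => /orP[] /eqP a_eq; subst a.
    have := subsetP Nx b; rewrite !inE eab (negbTE bw) orbF.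
    by move=> /(_ isT) ->; rewrite orbT.
  by have := subsetP Ny b; rewrite !inE eab (negbTE bw) orbF => /(_ isT) ->.
apply: leq_trans (card_size [:: x; y; w]); apply/subset_leq_card/subsetP => z _.
have [->|zw] := eqVneq z w; first by rewrite !inE eqxx !orbT.
have : z \in [:: x; y].
  by rewrite -(closed_connect xy_closed (e_2conn w x z xw zw)) mem_head.
by rewrite !inE => /orP[] ->; rewrite ?orbT.
Qed.

Definition upath (x : T) (s : seq T) := path e x s && uniq (x :: s).

Lemma upath_chord x p u q v r :
  upath x (p ++ u :: q ++ v :: r) -> e x u -> e x v -> p != [::] ->
  has_chorded_cycle e.
Proof.
case: p => // y p; rewrite /upath -(cat_rcons v) -cat_cons catA.
rewrite -cat_cons cat_path cat_uniq.
move=> /andP[/andP[P _] /andP[U _]] exu exv _.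
set s := (y :: p) ++ u :: rcons q v in P U.
have [u_y x_qv] : u != y /\ x \notin rcons q v.
  move: U; rewrite /s -cat_cons cat_uniq /=.
  case/and3P=> _ /norP[uNxyp /hasPn xNqv] _; split.
    by apply: contraNneq uNxyp => ->; rewrite !inE eqxx orbT.
  by apply/negP => /xNqv; rewrite inE eqxx.
exists (x :: s); split.
  split; first by rewrite /s /= size_cat /= size_rcons !addnS.
  rewrite /ucycle U andbT; change (path e x (rcons s x)).
  by rewrite rcons_path P /s last_cat /= last_rcons e_sym exv.
exists x, u; split=> //; rewrite ?mem_head ?(inE, mem_cat, eqxx, orbT) //.
  rewrite -cat_cons next_uniq_cat -?cat_cons //=.
  by case: q {s P U} x_qv => [|z q]; rewrite !inE // negb_or => /andP[].
by rewrite /s /= eqxx.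
Qed.

Definition longest_upath (x : T) (s : seq T) :=
  upath x s /\ forall y t, upath y t -> size t <= size s.

Lemma exists_longest_upath (x0 : T) : exists x s, longest_upath x s.
Proof.
have size_upath y t : upath y t -> size t < #|T|.
  by case/andP=> _ /card_uniqP /= <-; apply: max_card.
pose has_upath n := [exists x, [exists t : n.-tuple T, upath x t]].
have has_upath0 : exists n, has_upath n.
  by exists 0; apply/existsP; exists x0; apply/existsP; exists [tuple].
have has_upath_bound n : has_upath n -> n <= #|T|.
  by case/existsP=> y /existsP[t /size_upath]; rewrite size_tuple => /ltnW.
case: (ex_maxnP has_upath0 has_upath_bound) => n /existsP[x /existsP[s xs]] smax.
exists x, s; split=> // y t yt; rewrite size_tuple; apply: smax.
by apply/existsP; exists y; apply/existsP; exists (in_tuple t).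
Qed.

Lemma upath_rotate x a y w b :
  upath x (rcons a y ++ w :: b) -> e x w -> upath y (rcons (rev a) x ++ w :: b).
Proof.
move=> /andP[P U] exw; apply/andP; split.
  move: P; rewrite !cat_path !last_rcons /= exw => /and3P[P _ ->]; rewrite !andbT.
  have := rev_path e x (rcons a y); rewrite last_rcons belast_rcons rev_cons => ->.
  by rewrite (@eq_path _ _ e) // => u v; rewrite e_sym.
have -> : y :: rcons (rev a) x ++ w :: b = rev (x :: rcons a y) ++ w :: b.
  by rewrite rev_cons rev_rcons.
rewrite (perm_uniq (_ : perm_eq _ (x :: rcons a y ++ w :: b))) //.
by rewrite -cat_cons perm_cat2r perm_rev.
Qed.

Lemma longest_upath_rotate x a y w b :
  longest_upath x (rcons a y ++ w :: b) -> e x w ->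
  longest_upath y (rcons (rev a) x ++ w :: b).
Proof.
case=> xs long exw; split; first exact: upath_rotate.
by move=> z t /long; rewrite !size_cat !size_rcons size_rev.
Qed.

Section LongestUpathEnd.

Variables (x : T) (s : seq T).
Hypothesis longest : longest_upath x s.

Lemma longest_upath_nbr_mem w : e x w -> w \in s.
Proof.
case: longest => /andP[P U] long exw; apply/negPn/negP => wNs.
suff /long : upath w (x :: s) by rewrite ltnn.
rewrite /upath [path _ _ _]/= e_sym exw P cons_uniq U inE negb_or wNs !andbT.
by apply: contraTneq exw => ->; rewrite e_irr.
Qed.

Lemma longest_upath_head_neq : two_connected e -> x != head x s.
Proof.
move=> e_2conn; have [v] : exists v, v \notin [:: x].
  by apply: exists_notin; case: e_2conn => T3 _ _; apply: ltnW.
rewrite inE eq_sym => xv; have [u exu _] := two_connected_nbr_neq e_2conn xv.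
have := longest_upath_nbr_mem exu; case: longest => /andP[_].
case: s => [|h t] //= /andP[xNs _] _ _.
by apply: contraNneq xNs => ->; rewrite mem_head.
Qed.

Hypothesis no_chord : ~ has_chorded_cycle e.

Lemma longest_upath_nbhd w :
  e x w -> w != head x s -> nbhd e x \subset [:: head x s; w].
Proof.
move=> exw wNh; apply/subsetP => z; rewrite inE => exz; rewrite !inE.
have [//|zNh /=] := eqVneq z (head x s).
apply/negPn/negP => zNw; apply: no_chord.
move: longest.1 zNh wNh (longest_upath_nbr_mem exw).
case/splitPr: (longest_upath_nbr_mem exz) => p1 p2 xs zNh wNh.
rewrite mem_cat inE eq_sym (negbTE zNw) /= => /orP[w_p1 | w_p2].
  move: xs wNh; case/splitPr: w_p1 => q1 q2 xs wNh; rewrite -catA /= in xs wNh.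
  by apply: (upath_chord xs exw exz); case: q1 wNh {xs zNh} => //=; rewrite eqxx.
move: xs; case/splitPr: w_p2 => q1 q2 xs.
by apply: (upath_chord xs exz exw); case: p1 zNh {xs wNh} => //=; rewrite eqxx.
Qed.

End LongestUpathEnd.

Lemma longest_upath_end_nbhds x a y w b :
  ~ has_chorded_cycle e -> longest_upath x (rcons a y ++ w :: b) -> e x w ->
  [/\ y \notin x :: a, e y w, nbhd e x \subset [:: head y a; w]
    & nbhd e y \subset [:: head x (rev a); w]].
Proof.
move=> no_chord longest exw; have [/andP[P U] _] := longest.
have eyw : e y w by move: P; rewrite cat_path last_rcons /= => /and3P[].
move: U; rewrite -cat_cons cat_uniq => /and3P[U /norP[wN _] _].
move: U; rewrite -rcons_cons rcons_uniq => /andP[yNxa _].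
split=> //.
  have := longest_upath_nbhd longest no_chord exw.
  have -> : head x (rcons a y ++ w :: b) = head y a by case: (a).
  apply.
  by apply: contraNneq wN => ->; rewrite inE (headI a y) mem_head orbT.
have := longest_upath_nbhd (longest_upath_rotate longest exw) no_chord eyw.
have -> : head y (rcons (rev a) x ++ w :: b) = head x (rev a) by case: (rev a).
apply; apply: contraNneq wN => ->.
have : head x (rev a) \in rcons (rev a) x by rewrite headI mem_head.
by rewrite !(inE, mem_rcons, mem_rev) => /orP[] ->; rewrite ?orbT.
Qed.

End SimpleGraph.

Theorem corollary2p10 (T : finType) (e : rel T) :
  simple_graph e -> two_connected e -> 4 <= #|T| ->
  (forall x1 x2 : T, bad_vertex e x1 -> bad_vertex e x2 -> x1 = x2) ->
  has_chorded_cycle e.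
Proof.
move=> [e_irr e_sym] e_2conn T_ge4 bad_uniq; apply: NNPP => no_chord.
have /card_gt0P[x0 _] : 0 < #|T| by apply: leq_trans T_ge4.
have [x [s longest]] := exists_longest_upath e x0.
have [w exw wNh] := two_connected_nbr_neq e_2conn
  (longest_upath_head_neq e_irr e_sym longest e_2conn).
have w_s := longest_upath_nbr_mem e_irr e_sym longest exw.
move: longest wNh; case/splitPr: w_s => p b.
case/lastP: p => [|a y] longest; first by rewrite eqxx.
have [yNxa eyw Nx Ny] := longest_upath_end_nbhds e_irr e_sym no_chord longest exw.
have [xw yw] : x != w /\ y != w.
  by split; [move: exw | move: eyw]; apply: contraTneq => ->; rewrite e_irr.
case: a {longest} yNxa Nx Ny => [|a1 a] /= yNxa Nx Ny.
  by have := two_connected_small e_sym e_2conn xw yw Nx Ny; rewrite leqNgt T_ge4.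
set hy := head x _ in Ny.
have Nxy : nbhd e x :|: nbhd e y \subset [:: a1; hy; w].
  apply/subsetP => z; rewrite in_setU => /orP[/(subsetP Nx) | /(subsetP Ny)];
    by rewrite !inE => /orP[] ->; rewrite ?orbT.
have [yx xNy] : y != x /\ ~~ e x y.
  move: yNxa; rewrite !inE !negb_or => /and3P[yx ya1 _]; split=> //.
  apply/negP => exy; have := subsetP Nx y.
  by rewrite !inE exy (negbTE yw) (negbTE ya1) => /(_ isT).
have card_Nxy := leq_trans (subset_leq_card Nxy) (card_size _).
have bad_x : bad_vertex e x by exists y.
have bad_y : bad_vertex e y by exists x; rewrite eq_sym e_sym setUC.
by move: yx; rewrite (bad_uniq _ _ bad_x bad_y) eqxx.
Qed.
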